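(* Consider the kernel setting described in the context, with the quantities $A,a,\gamma_a,B,b,\gamma_b$ defined there, and the optimization problem $$\max_{\theta\in\mathbb{R}^M}\ \theta^\top A\theta-2a^\top\theta+\gamma_a\quad\text{s.t.}\quad \theta^\top B\theta-2b^\top\theta+\gamma_b\le\varepsilon. \qquad (\star)$$ Assume $B$ is positive definite, and assume $\hat a\not\perp Z$, where $\hat a=2a-2AB^{-1}b$ and $Z$ is the eigenspace of the generalized eigenvalue problem for $A$ and $-B$ (i.e. $Az=\alpha(-B)z$) corresponding to its rightmost generalized eigenvalue. Let $\hat A=-2A$, $\hat\varepsilon=\sqrt{\varepsilon+b^\top B^{-1}b-\gamma_b}$, and $\|v\|_B=\sqrt{v^\top Bv}$. Let $\alpha^*$ be the smallest eigenvalue of the $2M\times 2M$ generalized eigenvalue problem $$\begin{pmatrix}-B&\hat A\\ \hat A&-\frac{\hat a\hat a^\top}{\hat\varepsilon^2}\end{pmatrix}\begin{pmatrix}z_1\\ z_2\end{pmatrix}=\alpha^*\begin{pmatrix}O&B\\ B&O\end{pmatrix}\begin{pmatrix}z_1\\ z_2\end{pmatrix},$$ with corresponding eigenvector $(z_1,z_2)$, $z_1,z_2\in\mathbb{R}^M$. Set $\hat\theta_{\mathrm{opt}}=-\operatorname{sgn}(\hat a^\top z_2)\,\hat\varepsilon\,z_1/\|z_1\|_B$ and $\theta_{\mathrm{opt}}=\hat\theta_{\mathrm{opt}}+B^{-1}b$. Then $\theta_{\mathrm{opt}}$ is a global optimum of $(\star)$ (equivalently, $\hat\theta_{\mathrm{opt}}$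 is a global optimum of $\min_{\|\hat\theta\|_B\le\hat\varepsilon}\frac12\hat\theta^\top\hat A\hat\theta+\hat a^\top\hat\theta$).
   Context: Kernel setting (BODAME–KRR/KR). Let $\mathcal{X}$ be an input space, $k^*$ and $k_h$ positive-definite kernels on $\mathcal{X}$, and $\lambda>0$, $\varepsilon\ge 0$. The defender's true model is $f(x)=\sum_{s=1}^M\theta^*_s k^*(x,x^{\mathrm{tr}}_s)$ with $\theta^*\in\mathbb{R}^M$ and training points $x^{\mathrm{tr}}_1,\dots,x^{\mathrm{tr}}_M$; the surrogate model is $g_\theta(x)=\sum_{s=1}^M\theta_s k^*(x,x^{\mathrm{tr}}_s)$. The attacker has samples $x^{\mathrm{a}}_1,\dots,x^{\mathrm{a}}_n$ and fits by kernel ridge regression with kernel $k_h$ and regularization $\lambda$, giving parameter $(K_1+\lambda I_n)^{-1}K_2\theta$. The defender has objective samples $x^{\mathrm{obj}}_1,\dots,x^{\mathrm{obj}}_m$ and constraint samples $x^{\mathrm{con}}_1,\dots,x^{\mathrm{con}}_{m'}$. Define $K_1=(k_h(x^{\mathrm{a}}_i,x^{\mathrm{a}}_{i'}))_{i,i'}\in\mathbb{R}^{n\times n}$, $K_2=(k^*(x^{\mathrm{a}}_i,x^{\mathrm{tr}}_s))_{i,s}\in\mathbb{R}^{n\times M}$, $K_3=(k_h(x^{\mathrm{obj}}_j,x^{\mathrm{a}}_i))_{j,i}\in\mathbb{R}^{m\times n}$, $K_4=(k^*(x^{\mathrm{con}}_{j'},x^{\mathrm{tr}}_s))_{j',s}\in\mathbb{R}^{m'\times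 M}$, $f_1=(f(x^{\mathrm{obj}}_j))_{j=1}^m$, $f_2=(f(x^{\mathrm{con}}_{j'}))_{j'=1}^{m'}$, $\tilde A=K_3(K_1+\lambda I_n)^{-1}K_2$, $A=\frac1m\tilde A^\top\tilde A$, $a=\frac1m\tilde A^\top f_1$, $\gamma_a=\frac1m f_1^\top f_1$, $B=\frac1{m'}K_4^\top K_4$, $b=\frac1{m'}K_4^\top f_2$, $\gamma_b=\frac1{m'}f_2^\top f_2$. The function $\operatorname{sgn}(x)$ equals $1$ if $x>0$ and $-1$ if $x\le 0$. *)

From mathcomp Require Import all_boot all_order all_algebra.
From mathcomp Require Export reals.
Set Implicit Arguments. Unset Strict Implicit. Unset Printing Implicit Defensive.
Import Order.TTheory GRing.Theory Num.Theory.
Local Open Scope ring_scope.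

Definition pd_kernel (R : realType) (X : Type) (k : X -> X -> R) : Prop :=
  (forall x y, k x y = k y x) /\
  (forall (N : nat) (xs : 'I_N -> X) (c : 'I_N -> R),
      0 <= \sum_(i < N) \sum_(j < N) c i * c j * k (xs i) (xs j)).

Definition gram (R : realType) (X : Type) (k : X -> X -> R) (p q : nat)
  (xs : 'I_p -> X) (ys : 'I_q -> X) : 'M[R]_(p, q) :=
  \matrix_(i, j) k (xs i) (ys j).

Definition kexp (R : realType) (X : Type) (k : X -> X -> R) (M : nat)
  (xtr : 'I_M -> X) (th : 'cV[R]_M) (x : X) : R :=
  \sum_(s < M) th s 0 * k x (xtr s).

Definition evalv (R : realType) (X : Type) (g : X -> R) (p : nat)
  (xs : 'I_p -> X) : 'cV[R]_p := \col_j g (xs j).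

Definition qform (R : realType) (M : nat) (Q : 'M[R]_M) (v : 'cV[R]_M) : R :=
  (v^T *m Q *m v) 0 0.
Definition dotv (R : realType) (M : nat) (u v : 'cV[R]_M) : R := (u^T *m v) 0 0.

Definition normB (R : realType) (M : nat) (B : 'M[R]_M) (v : 'cV[R]_M) : R :=
  Num.sqrt (qform B v).

Definition sgn (R : realType) (x : R) : R := if 0 < x then 1 else -1.

Definition posdef (R : realType) (M : nat) (B : 'M[R]_M) : Prop :=
  B^T = B /\ forall v : 'cV[R]_M, v != 0 -> 0 < qform B v.

Definition geneig (R : realType) (p : nat) (P Q : 'M[R]_p) (alpha : R)
  (z : 'cV[R]_p) : Prop := z != 0 /\ P *m z = alpha *: (Q *m z).

From mathcomp Require Import all_boot all_order all_algebra.
From mathcomp Require Import reals.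
From mathcomp Require Import ring lra.
From mathcomp Require Import boolp classical_sets topology normedtype derive.
Import Order.TTheory GRing.Theory Num.Theory.
Local Open Scope ring_scope.

(* Since b = B thstar, the substitution theta = thhat + B^-1 b turns the problem into the
   trust-region subproblem  min thhat^T Ahat thhat + 2 ahat^T thhat  s.t. ||thhat||_B <= epshat,
   for which a feasible x with (Ahat + l B) x = - ahat, ||x||_B = epshat, l >= 0 and
   Ahat + l B positive semidefinite is a global minimiser.
   Minimising the Rayleigh quotient shows that Ahat + alpha0 B is positive semidefinite.
   For l > alpha0 a Schur complement gives
     det (L + l Rm) = (-1)^M det (Ahat + l B)^2 (1 - ||(Ahat + l B)^-1 ahat||_B^2 / epshat^2),
   and because ahat is not orthogonal to the kernel of Ahat + alpha0 B the last factor is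
   negative just right of alpha0 and positive for large l.  So the pencil (L, Rm) has an
   eigenvalue below -alpha0, whence l := - alphastar > alpha0, and the two block rows of
   L z = alphastar Rm z say that thhat is the KKT point above. *)

Section BilinearForms.
Context {R : realType}.

Lemma dotv_mull p q (Q : 'M[R]_(p, q)) (u : 'cV[R]_q) (v : 'cV[R]_p) :
  dotv (Q *m u) v = dotv u (Q^T *m v).
Proof. by rewrite /dotv trmx_mul mulmxA. Qed.

Context {n : nat}.
Implicit Types (B Q S : 'M[R]_n) (u v w : 'cV[R]_n).

Lemma dotvC u v : dotv u v = dotv v u.
Proof. by rewrite /dotv -{1}[v]trmxK -trmx_mul mxE. Qed.

Lemma dotvDl u1 u2 v : dotv (u1 + u2) v = dotv u1 v + dotv u2 v.
Proof. by rewrite /dotv linearD /= mulmxDl mxE. Qed.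
Lemma dotvDr u v1 v2 : dotv u (v1 + v2) = dotv u v1 + dotv u v2.
Proof. by rewrite /dotv mulmxDr mxE. Qed.
Lemma dotvZl a u v : dotv (a *: u) v = a * dotv u v.
Proof. by rewrite /dotv linearZ /= -scalemxAl mxE. Qed.
Lemma dotvZr a u v : dotv u (a *: v) = a * dotv u v.
Proof. by rewrite /dotv -scalemxAr mxE. Qed.
Lemma dotvNl u v : dotv (- u) v = - dotv u v.
Proof. by rewrite -scaleN1r dotvZl mulN1r. Qed.
Lemma dotvNr u v : dotv u (- v) = - dotv u v.
Proof. by rewrite -scaleN1r dotvZr mulN1r. Qed.
Lemma dotvBl u1 u2 v : dotv (u1 - u2) v = dotv u1 v - dotv u2 v.
Proof. by rewrite dotvDl dotvNl. Qed.
Lemma dotvBr u v1 v2 : dotv u (v1 - v2) = dotv u v1 - dotv u v2.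
Proof. by rewrite dotvDr dotvNr. Qed.
Lemma dotv0l u : dotv 0 u = 0.
Proof. by rewrite /dotv trmx0 mul0mx mxE. Qed.
Lemma dotv0r u : dotv u 0 = 0.
Proof. by rewrite /dotv mulmx0 mxE. Qed.

Lemma dotv_ge0 v : 0 <= dotv v v.
Proof. by rewrite /dotv mxE sumr_ge0 // => i _; rewrite !mxE -expr2 sqr_ge0. Qed.

Lemma dotv_eq0 v : (dotv v v == 0) = (v == 0).
Proof.
apply/idP/eqP => [|->]; last by rewrite dotv0r.
rewrite /dotv mxE psumr_eq0 => [/allP v0|i _]; last by rewrite !mxE -expr2 sqr_ge0.
apply/matrixP => i j; rewrite (ord1 j) !mxE.
by have := v0 i (mem_index_enum _); rewrite !mxE -expr2 sqrf_eq0 => /eqP.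
Qed.

Definition bform Q u v := (u^T *m Q *m v) 0 0.

Lemma qformE Q v : qform Q v = bform Q v v. Proof. by []. Qed.

Lemma bformE Q u v : bform Q u v = dotv u (Q *m v).
Proof. by rewrite /bform /dotv mulmxA. Qed.

Lemma bformC Q u v : Q^T = Q -> bform Q u v = bform Q v u.
Proof. by move=> QT; rewrite !bformE dotvC dotv_mull QT. Qed.

Lemma bformDl Q u1 u2 v : bform Q (u1 + u2) v = bform Q u1 v + bform Q u2 v.
Proof. by rewrite !bformE dotvDl. Qed.
Lemma bformDr Q u v1 v2 : bform Q u (v1 + v2) = bform Q u v1 + bform Q u v2.
Proof. by rewrite !bformE mulmxDr dotvDr. Qed.
Lemma bformZl Q a u v : bform Q (a *: u) v = a * bform Q u v.
Proof. by rewrite !bformE dotvZl. Qed.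
Lemma bformZr Q a u v : bform Q u (a *: v) = a * bform Q u v.
Proof. by rewrite !bformE -scalemxAr dotvZr. Qed.
Lemma bformNl Q u v : bform Q (- u) v = - bform Q u v.
Proof. by rewrite !bformE dotvNl. Qed.
Lemma bformNr Q u v : bform Q u (- v) = - bform Q u v.
Proof. by rewrite !bformE mulmxN dotvNr. Qed.
Lemma bformBl Q u1 u2 v : bform Q (u1 - u2) v = bform Q u1 v - bform Q u2 v.
Proof. by rewrite bformDl bformNl. Qed.
Lemma bformBr Q u v1 v2 : bform Q u (v1 - v2) = bform Q u v1 - bform Q u v2.
Proof. by rewrite bformDr bformNr. Qed.
Lemma bform0r Q u : bform Q u 0 = 0.
Proof. by rewrite bformE mulmx0 dotv0r. Qed.

Lemma bformMD Q S u v : bform (Q + S) u v = bform Q u v + bform S u v.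
Proof. by rewrite !bformE mulmxDl dotvDr. Qed.
Lemma bformMZ Q a u v : bform (a *: Q) u v = a * bform Q u v.
Proof. by rewrite !bformE -scalemxAl dotvZr. Qed.
Lemma bformMN Q u v : bform (- Q) u v = - bform Q u v.
Proof. by rewrite !bformE mulNmx dotvNr. Qed.

Lemma bformZZ Q a v : bform Q (a *: v) (a *: v) = a ^+ 2 * bform Q v v.
Proof. by rewrite bformZl bformZr mulrA expr2. Qed.

Lemma bform_gram p (K : 'M[R]_(p, n)) v : bform (K^T *m K) v v = dotv (K *m v) (K *m v).
Proof. by rewrite bformE dotv_mull mulmxA. Qed.

Lemma quad_shift Q (c t0 th : 'cV[R]_n) : Q^T = Q ->
  bform Q th th - 2 * dotv c th = bform Q t0 t0 - 2 * dotv c t0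
    + bform Q (th - t0) (th - t0) - 2 * dotv (c - Q *m t0) (th - t0).
Proof.
move=> QT; have Qt0 u : dotv (Q *m t0) u = bform Q u t0 by rewrite dotvC bformE.
rewrite !(bformBl, bformBr, dotvBl, dotvBr) !Qt0 (bformC _ t0 th QT); ring.
Qed.

Definition psd Q := forall v, 0 <= bform Q v v.

Lemma psd_bform_eq0 S v : S^T = S -> psd S -> bform S v v = 0 -> S *m v = 0.
Proof.
move=> ST S_psd Sv0; set y := S *m v; apply/eqP; rewrite -dotv_eq0; apply/eqP.
have yv : bform S y v = dotv y y by rewrite bformE.
have := S_psd ((bform S y y + 1) *: v - dotv y y *: y).
rewrite !(bformBl, bformBr, bformZl, bformZr) Sv0 yv (bformC _ v y ST) yv => ge0.
have := dotv_ge0 y; have := S_psd y; nra.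
Qed.

Lemma psd_cauchy_schwarz S u v : S^T = S -> psd S ->
  bform S u v ^+ 2 <= bform S u u * bform S v v.
Proof.
move=> ST S_psd; have [v0|v_neq0] := eqVneq (bform S v v) 0.
  by rewrite bformE psd_bform_eq0 // dotv0r v0 expr0n mulr0.
have v_gt0 : 0 < bform S v v by rewrite lt_def v_neq0 S_psd.
have := S_psd (bform S v v *: u - bform S u v *: v).
rewrite !(bformBl, bformBr, bformZl, bformZr) (bformC _ v u ST); nra.
Qed.

Lemma posdef_psd {B} : posdef B -> psd B.
Proof.
by move=> [_ Bpd] v; have [->|/Bpd/ltW//] := eqVneq v 0; rewrite bform0r.
Qed.

Lemma posdef_eq0 {B v} : posdef B -> bform B v v = 0 -> v = 0.
Proof. by move=> [_ Bpd] Bv0; apply/eqP/contraT => /Bpd; rewrite qformE Bv0 ltxx. Qed.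

Lemma posdef_unitmx {B} : posdef B -> B \in unitmx.
Proof.
move=> Bpd; rewrite unitmxE unitfE; apply/negP => /det0P[r r_neq0 rB].
have Br : B *m r^T = 0 by rewrite -{1}Bpd.1 -trmx_mul rB trmx0.
by move: r_neq0; rewrite -trmx_eq0 (posdef_eq0 (v := r^T) Bpd) ?eqxx // bformE Br dotv0r.
Qed.

End BilinearForms.

Section Determinants.
Context {R : realType}.

Lemma det_block_schur n1 n2 (A : 'M[R]_n1) (Bu : 'M[R]_(n1, n2))
    (Bl : 'M[R]_(n2, n1)) (D : 'M[R]_n2) : A \in unitmx ->
  \det (block_mx A Bu Bl D) = \det A * \det (D - Bl *m invmx A *m Bu).
Proof.
move=> A_unit.
have -> : block_mx A Bu Bl D =
    block_mx 1%:M 0 (Bl *m invmx A) 1%:M *m block_mx A Bu 0 (D - Bl *m invmx A *m Bu).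
  by rewrite mulmx_block !mul1mx !mul0mx !addr0 mulmxKV // addrC subrK.
by rewrite det_mulmx det_lblock det_ublock !det1 !mul1r.
Qed.

Lemma det_1Dmul n k (U : 'M[R]_(n, k)) (V : 'M[R]_(k, n)) :
  \det (1%:M + U *m V) = \det (1%:M + V *m U).
Proof.
have lower : block_mx 1%:M (- V) U 1%:M =
    block_mx 1%:M 0 U 1%:M *m block_mx 1%:M (- V) 0 (1%:M + U *m V).
  by rewrite mulmx_block !mul1mx !mulmx1 !mul0mx !addr0 mulmxN addrCA addNr addr0.
have upper : block_mx 1%:M (- V) U 1%:M =
    block_mx (1%:M + V *m U) (- V) 0 1%:M *m block_mx 1%:M 0 U 1%:M.
  by rewrite mulmx_block !mul1mx !mulmx1 !mul0mx mulmx0 !add0r mulNmx addrK.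
have := congr1 determinant lower; rewrite {1}upper !det_mulmx.
by rewrite !det_lblock !det_ublock !det1 !mul1r !mulr1.
Qed.

Lemma det_1Drank1 n (u v : 'cV[R]_n) : \det (1%:M + u *m v^T) = 1 + dotv v u.
Proof. by rewrite det_1Dmul det_mx11 mxE [in LHS]mxE. Qed.

Lemma det_pencil_poly p (L Rm : 'M[R]_p) :
  {D : {poly R} | forall x, D.[x] = \det (L + x *: Rm)}.
Proof.
exists (\det (map_mx polyC L + 'X *: map_mx polyC Rm)) => x.
rewrite -[LHS]/(horner_eval x _) -det_map_mx; congr (\det _).
by apply/matrixP => i j; rewrite !mxE /= horner_evalE !hornerE.
Qed.

Lemma det_pencil_rank1 n (B P : 'M[R]_n) (g : 'cV[R]_n) (k : R) :
    B \in unitmx -> P \in unitmx -> P^T = P ->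
  \det (block_mx (- B) P P (- (k *: (g *m g^T)))) =
  (-1) ^+ n * \det P ^+ 2 * (1 - k * bform B (invmx P *m g) (invmx P *m g)).
Proof.
move=> B_unit P_unit PT.
have NB_unit : - B \in unitmx by rewrite -scaleN1r unitmxZ ?unitrN1.
have invNB : invmx (- B) = - invmx B.
  by rewrite -scaleN1r invmxZ ?scaleN1r // invrN1 scaleN1r.
set Q := P *m invmx B *m P; set Qi := invmx P *m B *m invmx P.
have QQi : Q *m Qi = 1%:M by rewrite /Q /Qi !mulmxA mulmxK // mulmxKV // mulmxV.
rewrite det_block_schur //.
have -> : - (k *: (g *m g^T)) - P *m invmx (- B) *m P =
    Q *m (1%:M + (- k *: (Qi *m g)) *m g^T).
  rewrite invNB mulmxN mulNmx opprK mulmxDr mulmx1 -scalemxAl -scalemxAr mulmxA.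
  by rewrite (mulmxA Q) QQi mul1mx scaleNr addrC.
rewrite det_mulmx det_1Drank1 dotvZr.
have -> : dotv g (Qi *m g) = bform B (invmx P *m g) (invmx P *m g).
  by rewrite /bform /Qi trmx_mul trmx_inv PT /dotv !mulmxA.
rewrite /Q !det_mulmx det_inv -scaleN1r detZ.
have detB_neq0 : \det B != 0 by rewrite -unitfE -unitmxE.
by field.
Qed.

Lemma det_pencil_ivt p (L Rm : 'M[R]_p) a b : a <= b ->
    \det (L + a *: Rm) * \det (L + b *: Rm) <= 0 ->
  exists2 x, a <= x <= b & \det (L + x *: Rm) = 0.
Proof.
move=> ab; have [D DE] := det_pencil_poly _ L Rm; rewrite -!DE => Dab.
have [Db0|Db_neq0] := eqVneq D.[b] 0; first by exists b; rewrite ?lexx ?ab -?DE.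
have [|x axb] := @poly_ivt _ (D.[b] *: D) a b ab.
  by rewrite !hornerZ mulrC Dab -expr2 sqr_ge0.
by rewrite rootZ // => /eqP Dx0; exists x; rewrite // -DE.
Qed.

Lemma geneig_of_det0 {p} {L Rm : 'M[R]_p} {x : R} : (L + x *: Rm)^T = L + x *: Rm ->
  \det (L + x *: Rm) = 0 -> exists z, geneig L Rm (- x) z.
Proof.
move=> LT /eqP/det0P[r r_neq0 rL]; exists r^T; split; first by rewrite trmx_eq0.
have : (L + x *: Rm) *m r^T = 0 by rewrite -LT -trmx_mul rL trmx0.
by rewrite mulmxDl -scalemxAl => /eqP; rewrite addr_eq0 scaleNr => /eqP.
Qed.

End Determinants.

Section RayleighQuotient.
Import numFieldNormedType.Exports.
Local Open Scope classical_set_scope.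
Context {R : realType} {n : nat}.

Lemma bform_continuous (Q : 'M[R]_n) :
  continuous (fun r : 'rV[R]_n => bform Q r^T r^T).
Proof.
have -> : (fun r : 'rV[R]_n => bform Q r^T r^T) =
    (fun r => \sum_j (\sum_i r 0 i * Q i j) * r 0 j).
  apply: funext => r; rewrite /bform !mxE; apply: eq_bigr => j _.
  by rewrite !mxE; congr (_ * _); apply: eq_bigr => i _; rewrite !mxE.
apply: (@continuous_big _ _ +%R 0 xpredT add_continuous) => j _ r.
apply: continuousM; last exact: coord_continuous.
apply: (@continuous_big _ _ +%R 0 xpredT add_continuous) => i _ s.
by apply: continuousM; [exact: coord_continuous | exact: cst_continuous].
Qed.

Let unit_sphere := [set r : 'rV[R]_n | dotv r^T r^T = 1].

Lemma unit_sphere_compact : compact unit_sphere.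
Proof.
apply: bounded_closed_compact.
  exists 1; split; first by rewrite num_real.
  move=> M M_gt1 r /= rr1; change (mx_norm r <= M); rewrite mx_normrE.
  apply: bigmax_le => [|[i j] _ /=]; first exact/ltW/lt_trans/M_gt1.
  rewrite (ord1 i); apply: le_trans (ltW M_gt1).
  suff : (r 0 j : R) ^+ 2 <= 1 by move=> rj2; apply/ler_normlP; split; nra.
  move: rr1; rewrite /unit_sphere /= /dotv mxE => <-.
  rewrite (bigD1 j) //= !mxE -expr2 lerDl.
  by apply: sumr_ge0 => k _; rewrite !mxE -expr2 sqr_ge0.
have -> : unit_sphere = (fun r => bform 1%:M r^T r^T) @^-1` [set 1].
  by apply/funext => r; rewrite /unit_sphere /= bformE mul1mx.
by apply: preimage_closed => [r _|]; [exact: bform_continuous | exact: closed_eq].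
Qed.

Lemma rayleigh_min (H B : 'M[R]_n) : (0 < n)%N -> posdef B ->
  exists2 c, c != 0 & forall v, bform H c c / bform B c c * bform B v v <= bform H v v.
Proof.
move=> n_gt0 Bpd.
have sphere_neq0 r : unit_sphere r -> r^T != 0.
  by rewrite /unit_sphere /= => rr1; rewrite -dotv_eq0 rr1 oner_neq0.
have f_cont : {within unit_sphere,
    continuous (fun r => bform H r^T r^T / bform B r^T r^T)}.
  apply: continuous_in_subspaceT => r /set_mem /sphere_neq0 r_neq0.
  apply: (continuousM (s := fun r => bform H r^T r^T)); first exact: bform_continuous.
  apply: continuousV; last exact: bform_continuous.
  by rewrite gt_eqF //; apply: Bpd.2.
have sphere_set0 : unit_sphere !=set0.
  exists (delta_mx 0 (Ordinal n_gt0)); rewrite /unit_sphere /= /dotv mxE.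
  rewrite (bigD1 (Ordinal n_gt0)) //= big1 ?addr0 => [|j /negbTE j_neq].
    by rewrite !mxE !eqxx mulr1.
  by rewrite !mxE j_neq mulr0.
have [c /set_mem c_sphere c_min] := EVT_min_rV sphere_set0 unit_sphere_compact f_cont.
exists c^T; first exact: sphere_neq0.
move=> v; have [->|v_neq0] := eqVneq v 0; first by rewrite !bform0r mulr0.
have Bv_gt0 : 0 < bform B v v by apply: Bpd.2.
have vv_gt0 : 0 < dotv v v by rewrite lt_def dotv_eq0 v_neq0 dotv_ge0.
pose s := Num.sqrt (dotv v v); have s_gt0 : 0 < s by rewrite sqrtr_gt0.
have sv_sphere : unit_sphere (s^-1 *: v)^T.
  rewrite /unit_sphere /= trmxK dotvZl dotvZr mulrA -expr2 exprVn sqr_sqrtr ?ltW //.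
  by rewrite mulVf ?gt_eqF.
have := c_min _ (mem_set sv_sphere); rewrite trmxK !bformZZ.
by rewrite -mulf_div divff ?gt_eqF ?exprn_gt0 ?invr_gt0 // mul1r ler_pdivlMr.
Qed.

Lemma rayleigh_min_geneig (H B : 'M[R]_n) : (0 < n)%N -> H^T = H -> posdef B ->
  exists mu c, geneig H B mu c /\ forall v, mu * bform B v v <= bform H v v.
Proof.
move=> n_gt0 HT Bpd; have [c c_neq0 c_min] := rayleigh_min H B n_gt0 Bpd.
set mu := _ / _ in c_min; exists mu, c; split=> //; split=> //.
have S_psd : psd (H - mu *: B) by move=> v; rewrite bformMD bformMN bformMZ subr_ge0.
have Sc0 : bform (H - mu *: B) c c = 0.
  by rewrite bformMD bformMN bformMZ /mu mulfVK ?subrr // gt_eqF // Bpd.2.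
have ST : (H - mu *: B)^T = H - mu *: B by rewrite linearB /= linearZ /= HT Bpd.1.
have := psd_bform_eq0 _ _ ST S_psd Sc0.
by rewrite mulmxBl -scalemxAl => /eqP; rewrite subr_eq0 => /eqP.
Qed.

End RayleighQuotient.

Section TrustRegion.
Context {R : realType} {n : nat}.
Variables (H B : 'M[R]_n) (g : 'cV[R]_n) (delta : R).
Hypotheses (HT : H^T = H) (Bpd : posdef B).

Definition trs_pencilL := block_mx (- B) H H (- ((delta ^+ 2)^-1 *: (g *m g^T))).
Definition trs_pencilR := block_mx 0 B B 0.

Definition secular l := bform B (invmx (H + l *: B) *m g) (invmx (H + l *: B) *m g).

Definition trs_solution (z : 'cV[R]_(n + n)) :=
  - (sgn (dotv g (dsubmx z)) * delta / normB B (usubmx z)) *: usubmx z.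

Lemma shift_trmx l : (H + l *: B)^T = H + l *: B.
Proof. by rewrite linearD /= linearZ /= HT Bpd.1. Qed.

Lemma bform_shift l u v : bform (H + l *: B) u v = bform H u v + l * bform B u v.
Proof. by rewrite bformMD bformMZ. Qed.

Lemma geneig_max_shift_psd a0 : (0 < n)%N ->
  (forall beta w, geneig H (- B) beta w -> beta <= a0) -> psd (H + a0 *: B).
Proof.
move=> n_gt0 a0_max.
have [mu [c [[c_neq0 Hc] c_min]]] := rayleigh_min_geneig H B n_gt0 HT Bpd.
have : - mu <= a0.
  by apply: (a0_max _ c); split=> //; rewrite Hc mulNmx scalerN scaleNr opprK.
by move=> mu_a0 v; rewrite bform_shift; have := c_min v; have := posdef_psd Bpd v; nra.
Qed.

Lemma trs_pencil_shift l : trs_pencilL + l *: trs_pencilR =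
  block_mx (- B) (H + l *: B) (H + l *: B) (- ((delta ^+ 2)^-1 *: (g *m g^T))).
Proof. by rewrite scale_block_mx add_block_mx !scaler0 !addr0. Qed.

Lemma trs_pencil_shift_trmx l :
  (trs_pencilL + l *: trs_pencilR)^T = trs_pencilL + l *: trs_pencilR.
Proof.
rewrite trs_pencil_shift tr_block_mx shift_trmx !linearN /= Bpd.1 linearZ /=.
by rewrite trmx_mul trmxK.
Qed.

Section ShiftedPencil.
Variable a0 : R.
Hypothesis Pa0_psd : psd (H + a0 *: B).

Lemma shift_posdef l : a0 < l -> posdef (H + l *: B).
Proof.
move=> a0_l; split=> [|v v_neq0]; first exact: shift_trmx.
have := Bpd.2 v v_neq0; have := Pa0_psd v; rewrite !qformE !bform_shift; nra.
Qed.

Lemma shift_unitmx l : a0 < l -> H + l *: B \in unitmx.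
Proof. by move=> /shift_posdef/posdef_unitmx. Qed.

(* (H + (a0 + eps) B) w = eps B w, so Cauchy-Schwarz bounds the secular function from
   below by (g.w)^2 / (eps^2 ||w||_B^2). *)
Lemma secular_gt_near (w : 'cV[R]_n) eps :
    (H + a0 *: B) *m w = 0 -> 0 < eps <= 1 ->
    eps * (bform B w w * delta ^+ 2) < dotv g w ^+ 2 ->
  delta ^+ 2 < secular (a0 + eps).
Proof.
move=> Pw /andP[eps_gt0 eps_le1].
set u := invmx (H + (a0 + eps) *: B) *m g.
have Pu : (H + (a0 + eps) *: B) *m u = g by rewrite mulKVmx // shift_unitmx // ltrDl.
have gw : dotv g w = eps * bform B u w.
  rewrite -Pu dotv_mull shift_trmx scalerDl addrA mulmxDl Pw add0r.
  by rewrite -scalemxAl dotvZr bformE.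
have CS := psd_cauchy_schwarz _ u w Bpd.1 (posdef_psd Bpd).
rewrite /secular -/u gw => eps_small; rewrite ltNge; apply/negP => phi_le.
set kw := bform B w w in CS eps_small *; set c := bform B u w in CS eps_small *.
have kw_ge0 : 0 <= kw := posdef_psd Bpd w.
have CS_eps : (eps * c) ^+ 2 <= eps ^+ 2 * (kw * delta ^+ 2).
  rewrite exprMn ler_wpM2l ?sqr_ge0 //; apply: le_trans CS _.
  by rewrite mulrC ler_wpM2l.
have : eps ^+ 2 * (kw * delta ^+ 2) <= eps * (kw * delta ^+ 2).
  by apply: ler_wpM2r; [rewrite mulr_ge0 ?sqr_ge0 | nra].
by move/(le_trans CS_eps); rewrite leNgt eps_small.
Qed.

Lemma secular_lt_far t : 1 <= t ->
    bform B (invmx B *m g) (invmx B *m g) < t * delta ^+ 2 ->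
  secular (a0 + t) < delta ^+ 2.
Proof.
move=> t_ge1 gam_lt; rewrite /secular.
set u := invmx (H + (a0 + t) *: B) *m g; set c := invmx B *m g.
have Pu : (H + (a0 + t) *: B) *m u = g.
  by rewrite mulKVmx // shift_unitmx // ltrDl (lt_le_trans ltr01).
move: gam_lt; set phi := bform B u u; set gam := bform B c c => gam_lt.
have phi_ge0 : 0 <= phi := posdef_psd Bpd u.
have gam_ge0 : 0 <= gam := posdef_psd Bpd c.
have d_ge : t * phi <= bform B u c.
  rewrite bformE mulKVmx ?posdef_unitmx // -Pu -bformE bform_shift mulrDl addrA.
  by rewrite lerDr -bform_shift Pa0_psd.
have CS := psd_cauchy_schwarz _ u c Bpd.1 (posdef_psd Bpd).
have [phi0|phi_gt0] := eqVneq phi 0; first by rewrite phi0; nra.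
have {}phi_gt0 : 0 < phi by rewrite lt_def phi_gt0.
have tphi_ge0 : 0 <= t * phi by rewrite mulr_ge0 // (le_trans ler01 t_ge1).
have tphi_sq : (t * phi) ^+ 2 <= phi * gam.
  by apply: le_trans CS; rewrite ler_sqr ?nnegrE // (le_trans tphi_ge0 d_ge).
have t2phi_le : t ^+ 2 * phi <= gam by rewrite -(ler_pM2r phi_gt0); nra.
have : t * phi < delta ^+ 2 by rewrite -(ltr_pM2l (lt_le_trans ltr01 t_ge1)) mulrA; lra.
nra.
Qed.

Lemma det_trs_pencil l : a0 < l ->
  \det (trs_pencilL + l *: trs_pencilR) =
  (-1) ^+ n * \det (H + l *: B) ^+ 2 * (1 - secular l / delta ^+ 2).
Proof.
move=> a0_l; rewrite trs_pencil_shift det_pencil_rank1 ?shift_unitmx ?shift_trmx //.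
  by rewrite [secular l / _]mulrC.
exact: posdef_unitmx.
Qed.

Lemma secular_crosses w : 0 < delta -> (H + a0 *: B) *m w = 0 -> dotv g w != 0 ->
  exists l1 l2, [/\ a0 < l1 <= l2, delta ^+ 2 < secular l1 & secular l2 < delta ^+ 2].
Proof.
move=> delta_gt0 Pw gw; have d2_gt0 : 0 < delta ^+ 2 by exact: exprn_gt0.
set G := dotv g w ^+ 2; have G_gt0 : 0 < G by rewrite lt_def sqrf_eq0 gw sqr_ge0.
have kd_ge0 : 0 <= bform B w w * delta ^+ 2 by rewrite mulr_ge0 ?(posdef_psd Bpd) ?ltW.
pose eps := G / (bform B w w * delta ^+ 2 + G).
have den_gt0 : 0 < bform B w w * delta ^+ 2 + G by rewrite ltr_wpDl.
have eps_gt0 : 0 < eps by rewrite divr_gt0.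
have eps_small : eps * (bform B w w * delta ^+ 2) < G.
  by rewrite mulrAC ltr_pdivrMr // ltr_pM2l // ltrDl.
have eps_le1 : eps <= 1 by rewrite ler_pdivrMr // mul1r lerDr.
set gam : R := bform B (invmx B *m g) (invmx B *m g).
have gam_ge0 : 0 <= gam := posdef_psd Bpd _.
have gd_ge0 : 0 <= gam / delta ^+ 2 by rewrite divr_ge0 // ltW.
pose t := eps + gam / delta ^+ 2 + 1.
have t_ge1 : 1 <= t by rewrite /t; lra.
have gam_lt : gam < t * delta ^+ 2.
  have : 0 <= eps * delta ^+ 2 by rewrite mulr_ge0 // ltW.
  by rewrite /t !mulrDl divfK ?gt_eqF // mul1r; lra.
exists (a0 + eps), (a0 + t); split.
- by rewrite ltrDl eps_gt0 lerD2l /t; lra.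
- by apply: (secular_gt_near w) => //; rewrite eps_gt0.
- exact: secular_lt_far t_ge1 gam_lt.
Qed.

Lemma trs_pencil_eigenvalue_lt w : 0 < delta -> (H + a0 *: B) *m w = 0 ->
    dotv g w != 0 ->
  exists2 beta, beta < - a0 & exists z, geneig trs_pencilL trs_pencilR beta z.
Proof.
move=> delta_gt0 Pw gw; have d2_gt0 : 0 < delta ^+ 2 by exact: exprn_gt0.
have [l1 [l2 [/andP[a0_l1 l12] sec1 sec2]]] := secular_crosses _ delta_gt0 Pw gw.
have [x /andP[l1_x _] detx] : exists2 x, l1 <= x <= l2 &
    \det (trs_pencilL + x *: trs_pencilR) = 0.
  apply: det_pencil_ivt => //; rewrite !det_trs_pencil ?(lt_le_trans a0_l1) //.
  rewrite mulrACA [X in X * _]mulrACA -expr2 sqrr_sign mul1r.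
  apply: mulr_ge0_le0; first by rewrite mulr_ge0 // sqr_ge0.
  apply: mulr_le0_ge0.
    by rewrite subr_le0 ler_pdivlMr // mul1r ltW.
  by rewrite subr_ge0 ler_pdivrMr // mul1r ltW.
have [z geneig_z] := geneig_of_det0 (trs_pencil_shift_trmx x) detx.
by exists (- x); [rewrite ltrN2 (lt_le_trans a0_l1) | exists z].
Qed.

End ShiftedPencil.

Lemma trs_pencil_eigvec_solution als z : 0 < delta ->
    posdef (H + (- als) *: B) -> geneig trs_pencilL trs_pencilR als z ->
  (H + (- als) *: B) *m trs_solution z = - g /\
  bform B (trs_solution z) (trs_solution z) = delta ^+ 2.
Proof.
move=> delta_gt0 Ppd [z_neq0 Lz]; rewrite /trs_solution.
set z1 := usubmx z; set z2 := dsubmx z; set s := dotv g z2.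
set P := H + (- als) *: B; set k := (delta ^+ 2)^-1.
have zE : z = col_mx z1 z2 by rewrite vsubmxK.
move: Lz; rewrite zE !mul_block_col scale_col_mx => /eq_col_mx[E1 E2].
have Pz2 : P *m z2 = B *m z1.
  move: E1; rewrite mul0mx add0r mulNmx mulmxDl -scalemxAl scaleNr => <-.
  by rewrite opprD opprK addrCA subrr addr0.
have Pz1 : P *m z1 = (k * s) *: g.
  move: E2; rewrite mul0mx addr0 mulNmx -scalemxAl -mulmxA [g^T *m z2]mx11_scalar.
  rewrite mul_mx_scalar scalerA mulmxDl -scalemxAl scaleNr => <-.
  by rewrite opprD opprK addNKr.
have Bz1 : bform B z1 z1 = k * s ^+ 2.
  have PT : P^T = P := shift_trmx (- als).
  rewrite bformE -Pz2 -PT -dotv_mull Pz1 dotvZl.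
  by rewrite -mulrA -expr2.
have s_neq0 : s != 0.
  apply: contraNneq z_neq0 => s0.
  have z10 : z1 = 0 by apply: (posdef_eq0 Bpd); rewrite Bz1 s0 expr0n mulr0.
  have z20 : z2 = 0 by apply: (posdef_eq0 Ppd); rewrite bformE Pz2 z10 mulmx0 dotv0r.
  by rewrite zE z10 z20 col_mx0.
have coefE : sgn s * delta / normB B z1 = delta ^+ 2 / s.
  have normE : normB B z1 = `|s| / delta.
    rewrite /normB qformE Bz1 /k -exprVn -exprMn sqrtr_sqr normrM normfV.
    by rewrite (gtr0_norm delta_gt0) mulrC.
  rewrite normE /sgn; have [s_gt0|s_le0] := ltrP 0 s.
    by rewrite gtr0_norm //; field; rewrite s_neq0 gt_eqF.
  have s_lt0 : s < 0 by rewrite lt_def eq_sym s_neq0.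
  by rewrite ltr0_norm //; field; rewrite s_neq0 gt_eqF.
rewrite coefE -scalemxAr Pz1 scalerA bformZZ Bz1 /k; split.
  by rewrite -[RHS]scaleN1r; congr (_ *: _); field; rewrite s_neq0 gt_eqF.
by field; rewrite s_neq0 gt_eqF.
Qed.

Lemma trs_kkt_optimal ls x : 0 <= ls -> psd (H + ls *: B) ->
    (H + ls *: B) *m x = - g -> bform B x x = delta ^+ 2 ->
  forall y, bform B y y <= delta ^+ 2 ->
  bform H x x + 2 * dotv g x <= bform H y y + 2 * dotv g y.
Proof.
move=> ls_ge0 P_psd Px Bx y By.
have Pxy v : bform (H + ls *: B) v x = - dotv g v by rewrite bformE Px dotvNr dotvC.
have Hx : bform H x x = - dotv g x - ls * delta ^+ 2.
  by have := Pxy x; rewrite bform_shift Bx => <-; rewrite addrK.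
have := P_psd (y - x); rewrite !(bformBl, bformBr) (bformC _ x y (shift_trmx ls)).
rewrite !Pxy bform_shift Hx.
have : ls * bform B y y <= ls * delta ^+ 2 by rewrite ler_wpM2l.
lra.
Qed.

Lemma trs_global_min a0 als z :
    (forall v, bform H v v <= 0) -> 0 <= delta ->
    (forall beta w, geneig H (- B) beta w -> beta <= a0) ->
    (exists w, H *m w = a0 *: (- B *m w) /\ dotv g w != 0) ->
    geneig trs_pencilL trs_pencilR als z ->
    (forall beta w, geneig trs_pencilL trs_pencilR beta w -> als <= beta) ->
  let x := trs_solution z in
  bform B x x <= delta ^+ 2 /\ forall y, bform B y y <= delta ^+ 2 ->
    bform H x x + 2 * dotv g x <= bform H y y + 2 * dotv g y.
Proof.
move=> H_nsd delta_ge0 a0_max [w [Hw gw]] z_eig als_min x.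
have [delta0|delta_neq0] := eqVneq delta 0.
  have -> : x = 0 by rewrite /x /trs_solution delta0 mulr0 mul0r oppr0 scale0r.
  rewrite delta0 expr0n /= bform0r dotv0r; split=> // y By.
  suff -> : y = 0 by rewrite bform0r dotv0r.
  by apply: (posdef_eq0 Bpd); apply/le_anti; rewrite By (posdef_psd Bpd).
have delta_gt0 : 0 < delta by rewrite lt_def delta_neq0.
have w_neq0 : w != 0 by apply: contraNneq gw => ->; rewrite dotv0r.
have n_gt0 : (0 < n)%N by rewrite (leq_trans _ (rank_leq_row w)) // lt0n mxrank_eq0.
have Pa0_psd := geneig_max_shift_psd a0 n_gt0 a0_max.
have Pw : (H + a0 *: B) *m w = 0 by rewrite mulmxDl Hw -scalemxAl mulNmx scalerN addNr.
have [beta beta_lt [z' z'_eig]] := trs_pencil_eigenvalue_lt _ Pa0_psd _ delta_gt0 Pw gw.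
have a0_lt : a0 < - als by rewrite ltrNr (le_lt_trans (als_min _ _ z'_eig)).
have P_pd := shift_posdef _ Pa0_psd _ a0_lt.
have [Px Bx] := trs_pencil_eigvec_solution _ _ delta_gt0 P_pd z_eig.
have Nals_ge0 : 0 <= - als.
  have := P_pd.2 w w_neq0; have := Bpd.2 w w_neq0; have := H_nsd w.
  rewrite !qformE bform_shift; nra.
split; first by rewrite Bx.
exact: trs_kkt_optimal _ _ Nals_ge0 (posdef_psd P_pd) Px Bx.
Qed.

End TrustRegion.

Lemma evalv_kexp {R : realType} (X : Type) (k : X -> X -> R) M p (xtr : 'I_M -> X)
    (xs : 'I_p -> X) (th : 'cV[R]_M) :
  evalv (kexp k xtr th) xs = gram k xs xtr *m th.
Proof.
by apply/matrixP => j i; rewrite (ord1 i) !mxE; apply: eq_bigr => s _; rewrite !mxE mulrC.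
Qed.

Theorem theorem3 (R : realType) (X : Type) (kstar kh : X -> X -> R)
  (lam eps : R) (M n m m' : nat) (thstar : 'cV[R]_M)
  (xtr : 'I_M -> X) (xa : 'I_n -> X) (xobj : 'I_m -> X) (xcon : 'I_m' -> X)
  (alpha0 alphastar : R) (z : 'cV[R]_(M + M)) :
  pd_kernel kstar -> pd_kernel kh -> 0 < lam -> 0 <= eps ->
  (0 < m)%N -> (0 < m')%N ->
  let f := kexp kstar xtr thstar in
  let K1 := gram kh xa xa in
  let K2 := gram kstar xa xtr in
  let K3 := gram kh xobj xa in
  let K4 := gram kstar xcon xtr in
  let f1 := evalv f xobj in
  let f2 := evalv f xcon in
  let At := K3 *m invmx (K1 + lam%:M) *m K2 in
  let A := (m%:R)^-1 *: (At^T *m At) in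
  let a := (m%:R)^-1 *: (At^T *m f1) in
  let ga := (m%:R)^-1 * dotv f1 f1 in
  let B := (m'%:R)^-1 *: (K4^T *m K4) in
  let b := (m'%:R)^-1 *: (K4^T *m f2) in
  let gb := (m'%:R)^-1 * dotv f2 f2 in
  let ahat := 2%:R *: a - 2%:R *: (A *m invmx B *m b) in
  let Ahat := - (2%:R *: A) in
  let epshat := Num.sqrt (eps + qform (invmx B) b - gb) in
  let L := block_mx (- B) Ahat Ahat (- ((epshat ^+ 2)^-1 *: (ahat *m ahat^T))) in
  let Rm := block_mx 0 B B 0 in
  let z1 : 'cV[R]_M := usubmx z in
  let z2 : 'cV[R]_M := dsubmx z in
  let thhat := - (sgn (dotv ahat z2) * epshat / normB B z1) *: z1 in
  let thopt := thhat + invmx B *m b in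
  let obj th := qform A th - 2%:R * dotv a th + ga in
  let con th := qform B th - 2%:R * dotv b th + gb in
  posdef B ->
  (* alpha0 is the rightmost generalized eigenvalue of (Ahat, -B); Z its eigenspace *)
  (exists w, geneig Ahat (- B) alpha0 w) ->
  (forall beta w, geneig Ahat (- B) beta w -> beta <= alpha0) ->
  (* ahat is not orthogonal to Z *)
  (exists w, Ahat *m w = alpha0 *: (- B *m w) /\ dotv ahat w != 0) ->
  (* alphastar is the smallest eigenvalue of the 2M x 2M pencil, with eigenvector z *)
  geneig L Rm alphastar z ->
  (forall beta w, geneig L Rm beta w -> alphastar <= beta) ->
  con thopt <= eps /\ (forall th, con th <= eps -> obj th <= obj thopt).
Proof.
move=> _ _ _ eps_ge0 _ _ f K1 K2 K3 K4 f1 f2 At A a ga B b gb ahat Ahat epshat L Rm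
  z1 z2 thhat thopt obj con Bpd _ a0_max a0_eig z_eig alpha_min.
have AT : A^T = A by rewrite /A linearZ /= trmx_mul trmxK.
have Ahat_nsd v : bform Ahat v v <= 0.
  by rewrite bformMN bformMZ bformMZ bform_gram oppr_le0 !mulr_ge0 ?dotv_ge0 ?invr_ge0.
have bE : b = B *m thstar by rewrite /b /f2 evalv_kexp /B -scalemxAl mulmxA.
have thstarE : invmx B *m b = thstar by rewrite bE mulKmx // posdef_unitmx.
have gbE : gb = bform B thstar thstar by rewrite /gb /f2 evalv_kexp bformMZ bform_gram.
have epshatE : epshat ^+ 2 = eps.
  by rewrite /epshat qformE bformE thstarE bE dotvC -bformE gbE addrK sqr_sqrtr.
have conE th : con th = bform B (th - thstar) (th - thstar).
  rewrite /con qformE (quad_shift _ _ thstar) ?Bpd.1 // bE subrr dotv0l.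
  by rewrite dotvC -bformE gbE; ring.
have objE th : obj th = obj thstar
    - (bform Ahat (th - thstar) (th - thstar) + 2 * dotv ahat (th - thstar)) / 2.
  rewrite /obj !qformE (quad_shift _ _ thstar th) // /Ahat bformMN (bformMZ A).
  by rewrite /ahat -mulmxA thstarE -scalerBr (dotvZl 2); field.
have HT : Ahat^T = Ahat by rewrite /Ahat linearN /= linearZ /= AT.
have [feas opt] := trs_global_min _ _ ahat _ HT Bpd _ _ _ Ahat_nsd (sqrtr_ge0 _)
  a0_max a0_eig z_eig alpha_min.
have thoptE : thopt - thstar = thhat by rewrite /thopt thstarE addrK.
split=> [|th]; first by rewrite conE thoptE -epshatE.
by rewrite !conE objE [obj thopt]objE thoptE -epshatE => /opt; lra.
Qed.
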